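(* Let $n\ge1$, $1\le d\le n$, and let $\overline{\mathsf{Del}}(n,d)$ be the LP: maximize $\sum_{\mathbf{x}\in\{0,1\}^n}f(\mathbf{x})$ over $f:\{0,1\}^n\to\mathbb{R}$ subject to $f(\mathbf{x})\ge0$ for all $\mathbf{x}$; $\widehat f(\mathbf{s})\ge0$ for all $\mathbf{s}$; $f(\mathbf{x})=0$ whenever $1\le w(\mathbf{x})\le d-1$; and $f(0^n)\le\mathrm{OPT}(\mathsf{Del}(n,d))$. Then every optimal solution of $\overline{\mathsf{Del}}(n,d)$ satisfies $f(0^n)=\mathrm{OPT}(\mathsf{Del}(n,d))$, and $\mathrm{OPT}(\overline{\mathsf{Del}}(n,d))=\big(\mathrm{OPT}(\mathsf{Del}(n,d))\big)^2$.
   Context: Fourier transform: $\widehat{f}(\mathbf{s})=2^{-n}\sum_{\mathbf{x}\in\{0,1\}^n}f(\mathbf{x})(-1)^{\mathbf{x}\cdot\mathbf{s}}$. $w(\mathbf{x})$ is Hamming weight. $\mathrm{OPT}$ denotes the optimal value of an LP. $\mathsf{Del}(n,d)$: maximize $\sum_{\mathbf{x}}f(\mathbf{x})$ over $f:\{0,1\}^n\to\mathbb{R}$ subject to $f\ge0$, $\widehat f\ge0$, $f(\mathbf{x})=0$ whenever $1\le w(\mathbf{x})\le d-1$, $f(0^n)=1$. *)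

From HB Require Import structures.
From mathcomp Require Import all_boot all_order all_algebra.
From mathcomp Require Import classical_sets reals.
Set Implicit Arguments. Unset Strict Implicit. Unset Printing Implicit Defensive.
Import Order.TTheory GRing.Theory Num.Theory.
Local Open Scope ring_scope.
Local Open Scope classical_set_scope.

Definition cube (n : nat) := {ffun 'I_n -> bool}.

Definition zeroPt (n : nat) : cube n := [ffun _ => false].

Definition wt (n : nat) (x : cube n) : nat := \sum_(i < n) (x i : nat).

(* inner product x . s over the integers (only its parity matters) *)
Definition dotp (n : nat) (x s : cube n) : nat := \sum_(i < n) ((x i && s i) : nat).

Section Del.
Variable R : realType.

Definition fourier (n : nat) (f : cube n -> R) (s : cube n) : R :=
  (2%:R ^+ n)^-1 * \sum_(x : cube n) f x * (-1) ^+ (dotp x s).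

Definition objective (n : nat) (f : cube n -> R) : R := \sum_(x : cube n) f x.

Definition del_common (n d : nat) (f : cube n -> R) : Prop :=
  (forall x, 0 <= f x) /\
  (forall s, 0 <= fourier f s) /\
  (forall x, (1 <= wt x <= d - 1)%N -> f x = 0).

Definition Del_feasible (n d : nat) (f : cube n -> R) : Prop :=
  del_common d f /\ f (zeroPt n) = 1.

Definition OPT_Del (n d : nat) : R :=
  sup [set objective f | f in [set f : cube n -> R | Del_feasible d f]].

Definition DelBar_feasible (n d : nat) (f : cube n -> R) : Prop :=
  del_common d f /\ f (zeroPt n) <= OPT_Del n d.

Definition OPT_DelBar (n d : nat) : R :=
  sup [set objective f | f in [set f : cube n -> R | DelBar_feasible d f]].

Definition DelBar_optimal (n d : nat) (f : cube n -> R) : Prop :=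
  DelBar_feasible d f /\ (forall g : cube n -> R, DelBar_feasible d g -> objective g <= objective f).

End Del.

From HB Require Import structures.
From mathcomp Require Import all_boot all_order all_algebra.
From mathcomp Require Import classical_sets reals.
Set Implicit Arguments.
Unset Strict Implicit.
Unset Printing Implicit Defensive.
Import Order.TTheory GRing.Theory Num.Theory.
Local Open Scope ring_scope.
Local Open Scope classical_set_scope.

(* Write M = OPT(Del(n,d)).  The proof rests on one homogeneity fact: the
   common constraints (f >= 0, \hat f >= 0, f = 0 on weights 1..d-1) form a
   cone, so any f in that cone with f(0^n) = c > 0 rescales to the Del-feasible
   f / c, whence  sum_x f(x) <= f(0^n) * M.  When f(0^n) = 0 the same bound
   follows from  sum_x f(x) = 2^n \hat f(0^n) <= 2^n sum_s \hat f(s)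
   = 2^n f(0^n)  (Fourier inversion at 0^n, via the character-sum identity).
   The latter bound also shows that OPT(Del) is finite, and the indicator of
   0^n shows M >= 1.
   Consequently every \overline{Del}-feasible f has objective <= M^2, the
   value M^2 is approached by M * g for Del-feasible g, and an optimal f must
   satisfy M^2 <= objective f <= f(0^n) * M, forcing f(0^n) = M.
   None of this uses 1 <= d <= n; the argument works for all n and d. *)

Section Cube.
Variables (R : realType) (n : nat).

Definition flip (i : 'I_n) (s : cube n) : cube n :=
  [ffun j => if j == i then ~~ s j else s j].

Lemma flipK (i : 'I_n) : involutive (flip i).
Proof. by move=> s; apply/ffunP => j; rewrite !ffunE; case: eqP => // _; rewrite negbK. Qed.

Lemma dotp_flip_odd (x s : cube n) (i : 'I_n) :
  x i -> odd (dotp x s + dotp x (flip i s)).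
Proof.
move=> xi; rewrite /dotp (bigD1 i) //= [X in (_ + X)%N](bigD1 i) //= ffunE eqxx xi /=.
rewrite [X in (_ + (_ + X))%N](eq_bigr (fun j => (x j && s j) : nat)); last first.
  by move=> j /negbTE ji; rewrite ffunE ji.
by case: (s i); rewrite /= !add0n ?add1n ?addnS addnn /= odd_double.
Qed.

Lemma dotp0 (x : cube n) : dotp x (zeroPt n) = 0%N.
Proof. by rewrite /dotp big1 // => i _; rewrite ffunE andbF. Qed.

Lemma dotp0l (s : cube n) : dotp (zeroPt n) s = 0%N.
Proof. by rewrite /dotp big1 // => i _; rewrite ffunE. Qed.

Lemma pow2_gt0 : 0 < (2%:R ^+ n : R).
Proof. by rewrite exprn_gt0 // ltr0n. Qed.

(* Orthogonality of characters: sum_s (-1)^{x.s} = 2^n [x = 0^n].  For x <> 0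
   with x_i = 1, the involution flip i pairs each term with its negative. *)
Lemma char_sum (x : cube n) :
  \sum_(s : cube n) (-1) ^+ (dotp x s) = (x == zeroPt n)%:R * 2%:R ^+ n :> R.
Proof.
have [->|nz] := eqVneq x (zeroPt n).
  under eq_bigr do rewrite dotp0l expr0.
  by rewrite mul1r sumr_const card_ffun card_bool card_ord -natrX.
have [i xi] : exists i, x i.
  apply/existsP; apply: contraR nz; rewrite negb_exists => /forallP x0.
  by apply/eqP/ffunP => j; rewrite ffunE; apply/negbTE/x0.
rewrite mul0r; set S := \sum_s _.
have S_opp : S = - S.
  rewrite {1}/S (reindex_inj (inv_inj (flipK i))) -sumrN; apply: eq_bigr => s _.
  move: (dotp_flip_odd s xi); move: (dotp x s) (dotp x (flip i s)) => a b.
  rewrite -(signr_odd _ a) -(signr_odd _ b) oddD.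
  by case: (odd a); case: (odd b) => //= _; rewrite ?expr1 ?expr0 ?opprK.
by move/eqP: S_opp; rewrite -addr_eq0 -mulr2n mulrn_eq0 /= => /eqP.
Qed.

Lemma fourier_sum (f : cube n -> R) : \sum_s fourier f s = f (zeroPt n).
Proof.
rewrite /fourier -mulr_sumr exchange_big /=.
under eq_bigr => x _ do rewrite -mulr_sumr char_sum.
rewrite (bigD1 (zeroPt n)) //= eqxx big1 => [|x /negbTE ->]; last by rewrite mul0r mulr0.
by rewrite addr0 mul1r mulrCA mulVf ?mulr1 // lt0r_neq0 // pow2_gt0.
Qed.

Lemma objective_fourier0 (f : cube n -> R) :
  objective f = 2%:R ^+ n * fourier f (zeroPt n).
Proof.
rewrite /fourier mulrA mulfV ?mul1r ?lt0r_neq0 ?pow2_gt0 //.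
by apply: eq_bigr => x _; rewrite dotp0 expr0 mulr1.
Qed.

Lemma objective_le_pow2 (d : nat) (f : cube n -> R) :
  del_common d f -> objective f <= 2%:R ^+ n * f (zeroPt n).
Proof.
move=> [_ [fourier_ge0 _]].
rewrite objective_fourier0 ler_pM2l ?pow2_gt0 // -(fourier_sum f).
by rewrite (bigD1 (zeroPt n)) //= lerDl sumr_ge0.
Qed.

Lemma del_common_scale (d : nat) (f : cube n -> R) (c : R) :
  0 <= c -> del_common d f -> del_common d (fun x => c * f x).
Proof.
move=> c0 [f_ge0 [fourier_ge0 f_wt0]]; split; [|split].
- by move=> x; rewrite mulr_ge0.
- move=> s; have -> : fourier (fun x => c * f x) s = c * fourier f s.
    rewrite /fourier !mulr_sumr; apply: eq_bigr => x _.
    by rewrite !mulrA [_^-1 * c]mulrC.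
  by rewrite mulr_ge0.
- by move=> x /f_wt0 ->; rewrite mulr0.
Qed.

Lemma objective_scale (f : cube n -> R) (c : R) :
  objective (fun x => c * f x) = c * objective f.
Proof. by rewrite /objective mulr_sumr. Qed.

Definition delta0 : cube n -> R := fun x => (x == zeroPt n)%:R.

Lemma delta0_feasible (d : nat) : Del_feasible d delta0.
Proof.
split; last by rewrite /delta0 eqxx.
split; [|split].
- by move=> x; rewrite ler0n.
- move=> s; apply: mulr_ge0; first by rewrite invr_ge0 ltW // pow2_gt0.
  apply: sumr_ge0 => x _; rewrite /delta0; case: eqP => [->|]; last by rewrite mul0r.
  by rewrite dotp0l mul1r expr0.
- move=> x; rewrite /delta0; case: eqP => // ->.
  by rewrite /wt big1 // => i _; rewrite ffunE.
Qed.

Lemma objective_delta0 : objective delta0 = 1.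
Proof.
rewrite /objective (bigD1 (zeroPt n)) //= big1 ?addr0 /delta0 ?eqxx //.
by move=> x /negbTE ->.
Qed.

End Cube.

Section Optimum.
Variables (R : realType) (n d : nat).

Let Del_values : set R := [set objective f | f in [set f : cube n -> R | Del_feasible d f]].
Let DelBar_values : set R := [set objective f | f in [set f : cube n -> R | DelBar_feasible d f]].
Let M : R := OPT_Del R n d.

Lemma Del_values_has_sup : has_sup Del_values.
Proof.
split; first by exists 1, (@delta0 R n); [exact: delta0_feasible | exact: objective_delta0].
exists (2%:R ^+ n) => _ [f [fc f0] <-].
by have := objective_le_pow2 fc; rewrite f0 mulr1.
Qed.

Lemma OPT_Del_ge1 : 1 <= M.
Proof.
apply: (ub_le_sup (proj2 Del_values_has_sup)).
by exists (@delta0 R n); [exact: delta0_feasible | exact: objective_delta0].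
Qed.

Lemma objective_le_OPT (f : cube n -> R) :
  del_common d f -> objective f <= f (zeroPt n) * M.
Proof.
move=> fc; have [e|nz] := eqVneq (f (zeroPt n)) 0.
  by have := objective_le_pow2 fc; rewrite e mulr0 mul0r.
have c_gt0 : 0 < f (zeroPt n) by rewrite lt0r nz; case: fc => f_ge0 _; exact: f_ge0.
set c := f (zeroPt n) in nz c_gt0 *.
have normalized : Del_feasible d (fun x => c^-1 * f x).
  by split; [apply: del_common_scale; rewrite // invr_ge0 ltW | rewrite mulVf].
have : objective (fun x => c^-1 * f x) <= M.
  by apply: (ub_le_sup (proj2 Del_values_has_sup)); exists (fun x => c^-1 * f x).
by rewrite objective_scale -(ler_pM2l c_gt0) mulrA mulfV // mul1r.
Qed.

Lemma DelBar_values_le : forall y, DelBar_values y -> y <= M ^+ 2.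
Proof.
move=> _ [f [fc fM] <-]; apply: le_trans (objective_le_OPT fc) _.
by rewrite expr2 ler_pM2r // (lt_le_trans ltr01 OPT_Del_ge1).
Qed.

Lemma DelBar_values_has_sup : has_sup DelBar_values.
Proof.
split; last by exists (M ^+ 2); exact: DelBar_values_le.
exists 0, (fun _ => 0); last by rewrite /objective big1.
split; last by rewrite (le_trans ler01 OPT_Del_ge1).
by split; [|split] => // s; rewrite /fourier big1 ?mulr0 // => x _; rewrite mul0r.
Qed.

Lemma OPT_DelBar_le : OPT_DelBar R n d <= M ^+ 2.
Proof. by apply: ge_sup; [case: DelBar_values_has_sup | exact: DelBar_values_le]. Qed.

(* Scaling a Del-feasible g by M gives a DelBar-feasible function, so
   M * sup(Del values) <= OPT(DelBar). *)
Lemma OPT_DelBar_ge : M ^+ 2 <= OPT_DelBar R n d.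
Proof.
have M_gt0 : 0 < M by apply: lt_le_trans OPT_Del_ge1.
rewrite expr2 mulrC -ler_pdivlMr //.
apply: ge_sup; first by case: Del_values_has_sup.
move=> _ [g [gc g0] <-]; rewrite ler_pdivlMr // mulrC -objective_scale.
apply: (ub_le_sup (proj2 DelBar_values_has_sup)); exists (fun x => M * g x) => //.
by split; [apply: del_common_scale => //; exact: ltW | rewrite g0 mulr1].
Qed.

Lemma OPT_DelBar_eq : OPT_DelBar R n d = M ^+ 2.
Proof. by apply/eqP; rewrite eq_le OPT_DelBar_le OPT_DelBar_ge. Qed.

Lemma DelBar_optimal_zero (f : cube n -> R) : DelBar_optimal d f -> f (zeroPt n) = M.
Proof.
move=> [[fc f0_le] f_opt].
have M_gt0 : 0 < M by apply: lt_le_trans OPT_Del_ge1.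
have M2_le : M ^+ 2 <= objective f.
  rewrite -OPT_DelBar_eq; apply: ge_sup; first by case: DelBar_values_has_sup.
  by move=> _ [g gf <-]; exact: f_opt.
apply/eqP; rewrite eq_le f0_le /= -(ler_pM2r M_gt0) -expr2.
exact: le_trans M2_le (objective_le_OPT fc).
Qed.

End Optimum.

Theorem mainTheorem5 (R : realType) (n d : nat) :
  (1 <= n)%N -> (1 <= d <= n)%N ->
  (forall f : cube n -> R, DelBar_optimal d f -> f (zeroPt n) = OPT_Del R n d) /\
  OPT_DelBar R n d = (OPT_Del R n d) ^+ 2.
Proof.
move=> _ _; split; [exact: DelBar_optimal_zero | exact: OPT_DelBar_eq].
Qed.
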